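(* For every qutrit state $\rho$ (density operator on $\mathbb{C}^3$), $C_{\mathcal{F}}(\rho)=\overline{C}_{\mathcal{R}}(\rho)$.
   Context: Fix the computational basis $\{|i\rangle\}_{i=0}^{d-1}$ of $\mathbb{C}^d$ (here $d=3$) as the incoherent basis; $\mathcal{I}$ denotes the set of density operators diagonal in this basis. Let $|\phi^+\rangle=\frac{1}{\sqrt d}\sum_i|i\rangle$ and $\mathcal{U}_d$ the set of diagonal unitaries. The quantum coherence fraction is $C_{\mathcal{F}}(\rho)=\max_{U\in\mathcal{U}_d}\langle\phi^+|U^\dagger\rho U|\phi^+\rangle$. The robustness of coherence is $C_{\mathcal{R}}(\rho)=\min\{s\ge0: \exists\text{ density operator }\tau,\ (\rho+s\tau)/(1+s)\in\mathcal{I}\}$, and $\overline{C}_{\mathcal{R}}(\rho)=(1+C_{\mathcal{R}}(\rho))/d$. *)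

From HB Require Import structures.
From mathcomp Require Import all_boot all_order all_algebra.
From mathcomp Require Import complex.
From mathcomp Require Import reals.
Set Implicit Arguments. Unset Strict Implicit. Unset Printing Implicit Defensive.
Import Order.TTheory GRing.Theory Num.Theory.
Local Open Scope ring_scope.

Section Coherence.
Variable R : realType.
Local Notation C := (R[i]).
Variable d : nat.

Definition adj (m n : nat) (A : 'M[C]_(m, n)) : 'M[C]_(n, m) :=
  (map_mx Num.conj A)^T.

Definition density (rho : 'M[C]_d) : Prop :=
  adj rho = rho /\
  (forall v : 'cV[C]_d, 0 <= (adj v *m rho *m v) 0 0) /\
  \tr rho = 1.

Definition incoherent (rho : 'M[C]_d) : Prop :=
  density rho /\ is_diag_mx rho.

Definition diag_unitary (U : 'M[C]_d) : Prop :=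
  is_diag_mx U /\ adj U *m U = 1%:M.

Definition phi_plus : 'cV[C]_d := \col_(i < d) (sqrtC (d%:R))^-1.

Definition fidelity_val (rho U : 'M[C]_d) : C :=
  (adj phi_plus *m (adj U *m rho *m U) *m phi_plus) 0 0.

Definition is_coherence_fraction (rho : 'M[C]_d) (f : C) : Prop :=
  (exists U, diag_unitary U /\ fidelity_val rho U = f) /\
  (forall U, diag_unitary U -> fidelity_val rho U <= f).

Definition robustness_feasible (rho : 'M[C]_d) (s : C) : Prop :=
  0 <= s /\ exists tau, density tau /\ incoherent ((1 + s)^-1 *: (rho + s *: tau)).

Definition is_robustness (rho : 'M[C]_d) (s : C) : Prop :=
  robustness_feasible rho s /\
  (forall s', robustness_feasible rho s' -> s <= s').

End Coherence.

From HB Require Import structures.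
From mathcomp Require Import all_boot all_order all_algebra.
From mathcomp Require Import complex.
From mathcomp Require Import reals.
From mathcomp Require Import ring lra.
From mathcomp Require Import boolp classical_sets topology normedtype derive.
Import Order.TTheory GRing.Theory Num.Theory numFieldNormedType.Exports.
Set Implicit Arguments. Unset Strict Implicit. Unset Printing Implicit Defensive.
Local Open Scope ring_scope.

(* For a diagonal unitary [U = diag u] the fidelity is [u^* rho u / 3], so
   [C_F(rho)] is a third of the maximum [q] of [u^* rho u] over the torus
   [|u_0| = |u_1| = |u_2| = 1].  If [rho + s tau = (1 + s) Y] with [Y] diagonal of
   trace 1, evaluating at a maximiser gives [q <= 1 + s], so [C_R(rho) >= q - 1].
   Conversely, at a maximiser [u] the weights [s_i = (u_i)^* (rho u)_i] sum to [q],
   and [diag s - rho] is positive semidefinite: conjugated by [diag u] it has zero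
   row sums and is nonnegative on the torus, and for three coordinates this
   extends to all of [C^3] because three non-collinear points of the plane lie on
   a circle.  Then [tau = (diag s - rho) / (q - 1)] shows [C_R(rho) <= q - 1]. *)

Section Unimodular.
Variable R : rcfType.
Local Notation C := R[i].

Definition unimodular (z : C) := z^* * z = 1.

Lemma unimodular1 : unimodular 1.
Proof. by rewrite /unimodular rmorph1 mulr1. Qed.

Lemma unimodularM (y z : C) : unimodular y -> unimodular z -> unimodular (y * z).
Proof. by rewrite /unimodular rmorphM mulrACA => -> ->; rewrite mulr1. Qed.

Lemma unimodular_neq0 (z : C) : unimodular z -> z != 0.
Proof. by apply: contra_eq_neq => ->; rewrite mulr0 eq_sym oner_neq0. Qed.

Lemma unimodular_conjV (z : C) : unimodular z -> z^* = z^-1.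
Proof. by move=> hz; rewrite -[z^*]mulr1 -(mulfV (unimodular_neq0 hz)) mulrA hz mul1r. Qed.

Lemma unimodular_coord (a b : R) : unimodular (a +i* b)%C <-> a ^+ 2 + b ^+ 2 = 1.
Proof.
rewrite /unimodular /=; simpc; split; first by case=> <- _; rewrite !expr2.
by move=> h; apply/eqP; rewrite eq_complex /= -!expr2 h !eqxx /=; apply/eqP; ring.
Qed.

Lemma real_of_unimodular_test (c : C) :
  (forall y, unimodular y -> 0 <= c + c^* - y^* * c - y * c^*) -> c^* = c.
Proof.
case: c => c1 c2 H; suff -> : c2 = 0 by apply/eqP; rewrite eq_complex /= oppr0 !eqxx.
have test a b : a ^+ 2 + b ^+ 2 = 1 -> a * c1 + b * c2 <= c1.
  move=> /unimodular_coord /H; rewrite lecE => /andP [_]; rewrite /=; lra.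
have c_ge0 : 0 <= c1 ^+ 2 + c2 ^+ 2 by rewrite addr_ge0 ?sqr_ge0.
have [c0 | c_neq0] := eqVneq (c1 ^+ 2 + c2 ^+ 2) 0.
  by move: c0 => /eqP; rewrite paddr_eq0 ?sqr_ge0 // !sqrf_eq0 => /andP [_ /eqP].
(* The test at [y = c / |c|] yields [|c| <= Re c]. *)
have [N N_gt0 N2] : exists2 N : R, 0 < N & N ^+ 2 = c1 ^+ 2 + c2 ^+ 2.
  by exists (Num.sqrt (c1 ^+ 2 + c2 ^+ 2)); rewrite ?sqr_sqrtr // sqrtr_gt0 lt_def c_neq0.
have y_unit : (c1 / N) ^+ 2 + (c2 / N) ^+ 2 = 1.
  by rewrite !expr_div_n -mulrDl -N2 divff // expf_neq0 // gt_eqF.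
have := test _ _ y_unit.
rewrite mulrAC [c2 / N * c2]mulrAC -mulrDl -!expr2 -N2 expr2 mulfK ?gt_eqF // => N_le.
have N_ge0 := ltW N_gt0; have c1_ge0 := le_trans N_ge0 N_le.
have : c2 ^+ 2 <= 0 by rewrite -(lerD2l (c1 ^+ 2)) addr0 -N2 ler_sqr ?nnegrE.
by move=> h; apply/eqP; rewrite -sqrf_eq0 eq_le h sqr_ge0.
Qed.

End Unimodular.

Section RealParts.
Variable R : rcfType.
Local Notation C := R[i].

Lemma ge0_of_quadratic_ge0 (a b c : R) :
  (forall e, 0 < e -> 0 <= a + e * b + e ^+ 2 * c) -> 0 <= a.
Proof.
move=> H; rewrite leNgt; apply/negP => a_lt0.
set k := `|b| + `|c| + 1.
have na_gt0 : 0 < - a by rewrite oppr_gt0.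
have k_gt0 : 0 < k by rewrite ltr_wpDl // addr_ge0.
have nak_gt0 : 0 < - a + k by rewrite addr_gt0.
(* This [e] satisfies [e * k = - a * (1 - e)], which bounds the quadratic at [e]
   by [e * a < 0]. *)
set e := - a / (- a + k).
have e_gt0 : 0 < e by rewrite divr_gt0.
have ek : e * (- a) + e * k = - a by rewrite -mulrDr mulfVK ?gt_eqF.
have e_le1 : e <= 1.
  by rewrite -(ler_pM2r na_gt0) mul1r -[leRHS]ek lerDl mulr_ge0 ?ltW.
have hb : e * b <= e * `|b| by rewrite ler_pM2l // ler_norm.
have hc : e ^+ 2 * c <= e * `|c|.
  rewrite expr2 -mulrA ler_pM2l //; apply: le_trans (ler_norm _) _.
  by rewrite normrM gtr0_norm // ler_piMl.
have hk : e * k = e * `|b| + e * `|c| + e by rewrite /k; ring.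
have := H e e_gt0; have := mulr_gt0 e_gt0 na_gt0; clearbody e k; lra.
Qed.

Lemma conj_real_complex (e : R) : ((e%:C)%C : C)^* = (e%:C)%C.
Proof. by apply/eqP; rewrite eq_complex /= oppr0 !eqxx. Qed.

Lemma ge0_of_Re_ge0 (w : C) : w^* = w -> 0 <= complex.Re w -> 0 <= w.
Proof.
case: w => a b /eqP; rewrite eq_complex /= eqxx /= => /eqP b_opp a_ge0.
have : b *+ 2 == 0 by rewrite mulr2n -{1}b_opp addNr.
by rewrite mulrn_eq0 lecE /= a_ge0 andbT eq_sym.
Qed.

Lemma Re_quadratic (e : R) (a b c : C) :
  complex.Re (a + (e%:C)%C * b + (e%:C)%C ^+ 2 * c) =
  complex.Re a + e * complex.Re b + e ^+ 2 * complex.Re c.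
Proof. by case: a b c => ? ? [? ?] [? ?]; rewrite /= !expr2 /=; ring. Qed.

Lemma le_of_Re_le (z w : C) : z^* = z -> w^* = w ->
  complex.Re z <= complex.Re w -> z <= w.
Proof.
move=> hz hw; rewrite -subr_ge0 => h; rewrite -subr_ge0.
by apply: ge0_of_Re_ge0; [rewrite rmorphB /= hz hw | case: z w {hz hw} h => ? ? []].
Qed.

End RealParts.

Section TriangleForm.
Variable R : rcfType.
Local Notation C := R[i].

(* [x^* L x] for the matrix [L] with zero row sums whose entries above the
   diagonal are [-p], [-r] (row 0) and [-q] (row 1), and [L j i = (L i j)^*];
   [L] is Hermitian iff [p + r] and [p^* + q] are real. *)
Definition triangle_form (p q r x0 x1 x2 : C) : C :=
  (p + r) * x0^* * x0 + (p^* + q) * x1^* * x1 + (r^* + q^*) * x2^* * x2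
  - (x0^* * p * x1 + x1^* * p^* * x0 + x0^* * r * x2 + x2^* * r^* * x0
     + x1^* * q * x2 + x2^* * q^* * x1).

Lemma triangle_form_scale p q r x0 x1 x2 c :
  triangle_form p q r (c * x0) (c * x1) (c * x2) = c^* * c * triangle_form p q r x0 x1 x2.
Proof. rewrite /triangle_form !rmorphM /=; ring. Qed.

Lemma exists_circumcenter (B D : C) : B^* * D - B * D^* != 0 ->
  exists2 z : C, z != 0 &
    (B - z)^* * (B - z) = z^* * z /\ (D - z)^* * (D - z) = z^* * z.
Proof.
move=> hK; have hKc : B * D^* - B^* * D != 0 by rewrite -oppr_eq0 opprB.
pose z := B * D * (B^* - D^*) / (B^* * D - B * D^*).
have [eB eD] : (B - z)^* * (B - z) = z^* * z /\ (D - z)^* * (D - z) = z^* * z.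
  rewrite /z !(rmorphB, rmorphM, fmorphV) /= !conjCK.
  by split; field; rewrite hK hKc.
exists z => //; apply: contraNneq hK => z0.
move: eB; rewrite z0 subr0 rmorph0 mul0r => /eqP.
rewrite mulf_eq0 conjC_eq0 orbb => /eqP ->.
by rewrite rmorph0 !(mul0r, mulr0) subr0.
Qed.

Section RealDiagonal.
Variables p q r : C.
Hypotheses (real_pr : (p + r)^* = p + r) (real_pq : (p^* + q)^* = p^* + q).

Let r_conj : r^* = p + r - p^*.
Proof. by rewrite -real_pr rmorphD addrC addKr. Qed.

Let q_conj : q^* = p^* + q - p.
Proof. by rewrite -real_pq rmorphD /= conjCK addrC addKr. Qed.

Lemma triangle_form_shift x0 x1 x2 c :
  triangle_form p q r (x0 + c) (x1 + c) (x2 + c) = triangle_form p q r x0 x1 x2.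
Proof. by rewrite /triangle_form !rmorphD /= r_conj q_conj; ring. Qed.

Lemma triangle_form_conj x0 x1 x2 :
  (triangle_form p q r x0 x1 x2)^* = triangle_form p q r x0 x1 x2.
Proof.
by rewrite /triangle_form !(rmorphB, rmorphD, rmorphM) /= !conjCK r_conj q_conj; ring.
Qed.

Hypothesis torus_ge0 : forall v0 v1 v2,
  unimodular v0 -> unimodular v1 -> unimodular v2 -> 0 <= triangle_form p q r v0 v1 v2.

(* Non-collinear [0], [B], [D] lie on a circle: moving its center to the origin
   and rescaling its radius to 1 puts them on the torus. *)
Lemma triangle_form_ge0_noncollinear (B D : C) :
  B^* * D - B * D^* != 0 -> 0 <= triangle_form p q r 0 B D.
Proof.
move=> /exists_circumcenter [z z_neq0 [eB eD]].
rewrite -(triangle_form_shift _ _ _ (- z)) add0r.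
have normz_neq0 : `|z| != 0 :> C by rewrite normr_eq0.
have on_circle w : w^* * w = z^* * z -> unimodular (w / `|z|).
  move=> hw; rewrite /unimodular rmorphM fmorphV /= conj_normC mulrACA -invfM hw.
  by rewrite -expr2 normCK [z^* * z]mulrC divff // mulf_neq0 ?conjC_eq0.
have scaled w : w = `|z| * (w / `|z|) by rewrite mulrC mulfVK.
have -> : triangle_form p q r (- z) (B - z) (D - z) = triangle_form p q r
    (`|z| * (- z / `|z|)) (`|z| * ((B - z) / `|z|)) (`|z| * ((D - z) / `|z|)).
  by rewrite -!scaled.
rewrite triangle_form_scale conj_normC mulr_ge0 ?mulr_ge0 //.
by apply: torus_ge0; apply: on_circle; rewrite ?rmorphN ?mulrNN.
Qed.

Lemma triangle_form_perturb x0 x1 x2 y0 y1 y2 :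
    (forall e : R, 0 < e -> 0 <= triangle_form p q r
       (x0 + (e%:C)%C * y0) (x1 + (e%:C)%C * y1) (x2 + (e%:C)%C * y2)) ->
  0 <= triangle_form p q r x0 x1 x2.
Proof.
move=> H; set F := triangle_form p q r.
set T := F (x0 + y0) (x1 + y1) (x2 + y2) - F x0 x1 x2 - F y0 y1 y2.
have expand (e : R) :
    F (x0 + (e%:C)%C * y0) (x1 + (e%:C)%C * y1) (x2 + (e%:C)%C * y2) =
    F x0 x1 x2 + (e%:C)%C * T + (e%:C)%C ^+ 2 * F y0 y1 y2.
  by rewrite /T /F /triangle_form !(rmorphD, rmorphM) /= conj_real_complex; ring.
apply: ge0_of_Re_ge0; first exact: triangle_form_conj.
apply: (@ge0_of_quadratic_ge0 _ _ (complex.Re T) (complex.Re (F y0 y1 y2))) => e e_gt0.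
by have := H e e_gt0; rewrite -/F expand lecE Re_quadratic => /andP [].
Qed.

Lemma triangle_form_ge0_real_diag x0 x1 x2 : 0 <= triangle_form p q r x0 x1 x2.
Proof.
rewrite -(triangle_form_shift _ _ _ (- x0)) subrr.
move: (x1 - x0) (x2 - x0) => B D.
have [K0|] := eqVneq (B^* * D - B * D^*) 0; last exact: triangle_form_ge0_noncollinear.
have e_neq0 (e : R) : 0 < e -> (e%:C)%C != 0 :> C.
  by move=> e_gt0; rewrite eq_complex /= gt_eqF.
(* A degenerate triangle with [B != 0] (resp. [D != 0]) becomes non-degenerate
   when [D] (resp. [B]) moves orthogonally to it. *)
have [B0|B_neq0] := eqVneq B 0; last first.
  apply: (triangle_form_perturb (y0 := 0) (y1 := 0) (y2 := 'i * B)) => e e_gt0.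
  rewrite !mulr0 !addr0; apply: triangle_form_ge0_noncollinear.
  have -> : B^* * (D + (e%:C)%C * ('i * B)) - B * (D + (e%:C)%C * ('i * B))^* =
      (B^* * D - B * D^*) + 2%:R * (e%:C)%C * 'i * (B * B^*).
    by rewrite !(rmorphD, rmorphM) /= conj_real_complex conjCi; ring.
  by rewrite K0 add0r !mulf_neq0 ?pnatr_eq0 ?neq0Ci ?conjC_eq0 ?e_neq0.
have [D0|D_neq0] := eqVneq D 0; last first.
  apply: (triangle_form_perturb (y0 := 0) (y1 := 'i * D) (y2 := 0)) => e e_gt0.
  rewrite !mulr0 !addr0; apply: triangle_form_ge0_noncollinear.
  have -> : (B + (e%:C)%C * ('i * D))^* * D - (B + (e%:C)%C * ('i * D)) * D^* =
      (B^* * D - B * D^*) - 2%:R * (e%:C)%C * 'i * (D * D^*).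
    by rewrite !(rmorphD, rmorphM) /= conj_real_complex conjCi; ring.
  by rewrite K0 add0r oppr_eq0 !mulf_neq0 ?pnatr_eq0 ?neq0Ci ?conjC_eq0 ?e_neq0.
suff -> : triangle_form p q r 0 B D = 0 by [].
by rewrite B0 D0 /triangle_form rmorph0; ring.
Qed.

End RealDiagonal.

Lemma triangle_form_ge0 p q r :
    (forall v0 v1 v2, unimodular v0 -> unimodular v1 -> unimodular v2 ->
       0 <= triangle_form p q r v0 v1 v2) ->
  forall x0 x1 x2, 0 <= triangle_form p q r x0 x1 x2.
Proof.
(* Evaluating at [(y, 1, 1)] and [(1, y, 1)] forces the diagonal of [L] to be real. *)
move=> H; have H1 := @unimodular1 R.
have real_pr : (p + r)^* = p + r.
  apply: real_of_unimodular_test => y hy.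
  suff -> : p + r + (p + r)^* - y^* * (p + r) - y * (p + r)^* =
      triangle_form p q r y 1 1 by exact: H.
  by rewrite /triangle_form -[_ * y^* * y]mulrA hy !rmorphD rmorph1 /=; ring.
have real_pq : (p^* + q)^* = p^* + q.
  apply: real_of_unimodular_test => y hy.
  suff -> : p^* + q + (p^* + q)^* - y^* * (p^* + q) - y * (p^* + q)^* =
      triangle_form p q r 1 y 1 by exact: H.
  by rewrite /triangle_form -[_ * y^* * y]mulrA hy !rmorphD rmorph1 /= conjCK; ring.
exact: triangle_form_ge0_real_diag real_pr real_pq H.
Qed.

End TriangleForm.

Section QuadraticForms.
Variables (R : realType) (n : nat).
Local Notation C := R[i].
Implicit Types (M N : 'M[C]_n) (v : 'cV[C]_n).

Definition qform M v : C := (adj v *m M *m v) 0 0.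
Definition psd M := forall v, 0 <= qform M v.
Definition torus v := forall i, unimodular (v i 0).

Lemma adjE p q (A : 'M[C]_(p, q)) i j : adj A i j = (A j i)^*.
Proof. by rewrite !mxE. Qed.

Lemma adj_mul p q r (A : 'M[C]_(p, q)) (B : 'M[C]_(q, r)) : adj (A *m B) = adj B *m adj A.
Proof. by rewrite /adj map_mxM trmx_mul. Qed.

Lemma adjD p q (A B : 'M[C]_(p, q)) : adj (A + B) = adj A + adj B.
Proof. by apply/matrixP => i j; rewrite !mxE rmorphD. Qed.

Lemma adjZ p q c (A : 'M[C]_(p, q)) : adj (c *: A) = c^* *: adj A.
Proof. by apply/matrixP => i j; rewrite !mxE rmorphM. Qed.

Lemma qformE M v : qform M v = \sum_i \sum_j (v i 0)^* * M i j * v j 0.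
Proof.
rewrite /qform mxE exchange_big; apply: eq_bigr => j _.
rewrite mxE big_distrl; apply: eq_bigr => i _; by rewrite adjE.
Qed.

Lemma qformD M N v : qform (M + N) v = qform M v + qform N v.
Proof. by rewrite /qform mulmxDr mulmxDl mxE. Qed.

Lemma qformN M v : qform (- M) v = - qform M v.
Proof. by rewrite /qform mulmxN mulNmx mxE. Qed.

Lemma qformZ c M v : qform (c *: M) v = c * qform M v.
Proof. by rewrite /qform -scalemxAr -scalemxAl mxE. Qed.

Lemma qform_scalev c M v : qform M (c *: v) = c^* * c * qform M v.
Proof.
rewrite !qformE mulr_sumr; apply: eq_bigr => i _; rewrite mulr_sumr.
by apply: eq_bigr => j _; rewrite !mxE rmorphM; ring.
Qed.

Lemma qform_conj M v : adj M = M -> (qform M v)^* = qform M v.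
Proof.
move=> hM; rewrite !qformE rmorph_sum (exchange_big) /=; apply: eq_bigr => j _.
rewrite rmorph_sum; apply: eq_bigr => i _.
have -> : M j i = (M i j)^* by rewrite -{1}hM adjE.
by rewrite !rmorphM /= !conjCK; ring.
Qed.

Lemma qform_diag (e : 'rV[C]_n) v :
  qform (diag_mx e) v = \sum_i e 0 i * ((v i 0)^* * v i 0).
Proof.
rewrite qformE; apply: eq_bigr => i _; rewrite (bigD1 i) //= big1 ?addr0.
  by rewrite mxE eqxx mulr1n; ring.
by move=> j /negbTE ji; rewrite mxE eq_sym ji mulr0n mulr0 mul0r.
Qed.

Lemma qform_diag_torus (e : 'rV[C]_n) v :
  torus v -> qform (diag_mx e) v = \tr (diag_mx e).
Proof.
by move=> hv; rewrite qform_diag mxtrace_diag; apply: eq_bigr => i _; rewrite hv mulr1.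
Qed.

Lemma qform_pair M i j (t : C) :
  qform M (delta_mx i 0 + t *: delta_mx j 0) =
  M i i + t * M i j + t^* * M j i + t^* * t * M j j.
Proof.
have adj_delta k : adj (delta_mx k 0 : 'cV[C]_n) = delta_mx 0 k.
  by apply/matrixP => a b; rewrite !mxE rmorph_nat andbC.
have entry a b : ((delta_mx 0 a : 'rV[C]_n) *m M *m (delta_mx b 0 : 'cV[C]_n)) 0 0 = M a b.
  by rewrite -rowE -colE !mxE.
rewrite /qform adjD adjZ !adj_delta !mulmxDl !mulmxDr -!scalemxAl -!scalemxAr.
have tr1 (A : 'M[C]_1) : A 0 0 = \tr A by rewrite /mxtrace big_ord1.
rewrite tr1 !mxtraceD !mxtraceZ -!tr1 !entry; ring.
Qed.

Lemma qform_delta M i : qform M (delta_mx i 0) = M i i.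
Proof.
by rewrite -[delta_mx i 0]addr0 -(scale0r (delta_mx i 0)) qform_pair rmorph0; ring.
Qed.

Lemma psd_diag_ge0 M i : psd M -> 0 <= M i i.
Proof. by move=> hM; rewrite -qform_delta. Qed.

(* In [C], [0 <= z] forces [z] to be real; for [z = qform M (e_i + t e_j)] with
   [t = 1] and [t = 'i] this gives [M j i = (M i j)^*]. *)
Lemma psd_hermitian M : psd M -> adj M = M.
Proof.
move=> hM; apply/matrixP => i j; rewrite adjE.
have [hii hjj] := (geC0_conj (psd_diag_ge0 i hM), geC0_conj (psd_diag_ge0 j hM)).
have key t : t^* * ((M i j)^* - M j i) = t * (M i j - (M j i)^*).
  have := geC0_conj (hM (delta_mx i 0 + t *: delta_mx j 0)).
  rewrite qform_pair !(rmorphD, rmorphM) /= conjCK hii hjj => e.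
  apply/eqP; rewrite -subr_eq0; apply/eqP; move/eqP: e; rewrite -subr_eq0 => /eqP <-; ring.
have := key 1; rewrite rmorph1 !mul1r => k1.
have := key 'i; rewrite conjCi k1 mulNr => /eqP.
rewrite -subr_eq0 -opprD oppr_eq0 -mulr2n -mulrnAl mulf_eq0 mulrn_eq0 /=.
rewrite (negbTE (neq0Ci _)) /=.
by rewrite subr_eq0 => /eqP.
Qed.

Lemma psd_tr_ge0 M : psd M -> 0 <= \tr M.
Proof. by move=> hM; apply: sumr_ge0 => i _; apply: psd_diag_ge0. Qed.

Lemma psd_tr0 M : psd M -> \tr M = 0 -> M = 0.
Proof.
move=> hM htr.
have diag0 i : M i i = 0.
  by move/psumr_eq0P: htr => /(_ (fun k _ => psd_diag_ge0 k hM) i isT).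
apply/matrixP => i j; rewrite mxE.
have := hM (delta_mx i 0 + - (M i j)^* *: delta_mx j 0).
rewrite qform_pair !diag0 raddfN /= conjCK.
have -> : M j i = (M i j)^* by rewrite -{1}(psd_hermitian hM) adjE.
rewrite !(mulr0, addr0, add0r) !mulNr [_^* * _]mulrC -opprD oppr_ge0 -mulr2n.
rewrite pmulrn_lle0 // => h; apply/eqP.
by rewrite -mul_conjC_eq0 eq_le h mul_conjC_ge0.
Qed.

Lemma psdD M N : psd M -> psd N -> psd (M + N).
Proof. by move=> hM hN v; rewrite qformD addr_ge0. Qed.

Lemma psdZ c M : 0 <= c -> psd M -> psd (c *: M).
Proof. by move=> hc hM v; rewrite qformZ mulr_ge0. Qed.

Lemma density_psd M : psd M -> \tr M = 1 -> density M.
Proof. by move=> hM htr; split; [apply: psd_hermitian | split]. Qed.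

Lemma fidelity_valE M U : fidelity_val M U = qform M (U *m phi_plus R n).
Proof. by rewrite /fidelity_val /qform adj_mul !mulmxA. Qed.

Lemma fidelity_val_diag M (e : 'rV[C]_n) :
  fidelity_val M (diag_mx e) = n%:R^-1 * qform M e^T.
Proof.
rewrite fidelity_valE.
have -> : diag_mx e *m phi_plus R n = (sqrtC n%:R)^-1 *: e^T.
  by rewrite mul_diag_mx; apply/matrixP => i j; rewrite !mxE (ord1 j) mulrC.
have k_ge0 : 0 <= (sqrtC n%:R : C)^-1 by rewrite invr_ge0 sqrtC_ge0 ler0n.
by rewrite qform_scalev geC0_conj // -expr2 exprVn sqrtCK.
Qed.

Lemma diag_unitaryP (e : 'rV[C]_n) : diag_unitary (diag_mx e) <-> torus e^T.
Proof.
rewrite /diag_unitary /adj map_diag_mx tr_diag_mx mulmx_diag -diag_const_mx.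
split=> [[_ /matrixP he] i | he].
  by move: (he i i); rewrite !mxE !eqxx !mulr1n.
split; first exact: diag_mx_is_diag.
by congr diag_mx; apply/rowP => i; have := he i; rewrite /unimodular !mxE.
Qed.

Lemma coherence_fraction_torus_max M u : torus u ->
    (forall v, torus v -> qform M v <= qform M u) ->
  is_coherence_fraction M (n%:R^-1 * qform M u).
Proof.
move=> hu hmax; split.
  exists (diag_mx u^T); rewrite fidelity_val_diag trmxK.
  by split => //; apply/diag_unitaryP; rewrite trmxK.
move=> U hU; have [/diag_mxP [e eU] _] := hU; move: hU; rewrite eU => /diag_unitaryP he.
by rewrite fidelity_val_diag ler_wpM2l ?invr_ge0 ?ler0n ?hmax.
Qed.

Lemma robustness_feasible_ge M u s : torus u -> robustness_feasible M s ->
  qform M u <= 1 + s.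
Proof.
move=> hu [hs [tau [[_ [htau _]] [[_ [_ hY]] /diag_mxP [e he]]]]].
have s1 : 1 + s != 0 by rewrite gt_eqF // ltr_wpDr.
have : qform (M + s *: tau) u = 1 + s.
  rewrite -[M + _](scalerKV s1) -/(_ *: _) he qformZ qform_diag_torus //.
  by rewrite -he hY mulr1.
by rewrite qformD qformZ => <-; rewrite lerDl (mulr_ge0 hs (htau u)).
Qed.

Lemma robustness_feasible_certificate M D : density M -> is_diag_mx D ->
  psd (D - M) -> robustness_feasible M (\tr D - 1).
Proof.
move=> hM hD hDM; have [_ [M_psd M_tr]] := hM.
have trDM : \tr D - 1 = \tr (D - M) by rewrite mxtraceD raddfN /= M_tr.
have s_ge0 : 0 <= \tr D - 1 by rewrite trDM psd_tr_ge0.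
split=> //; have [s0 | s_neq0] := eqVneq (\tr D - 1) 0.
  have MD : M = D by apply/esym/subr0_eq/psd_tr0; rewrite -?trDM.
  exists M; split=> //; rewrite s0 scale0r !addr0 invr1 scale1r.
  by split=> //; rewrite MD.
exists ((\tr D - 1)^-1 *: (D - M)); split.
  by apply: density_psd; [apply: psdZ; rewrite ?invr_ge0 | rewrite mxtraceZ -trDM mulVf].
rewrite scalerA mulfV // scale1r addrC subrK addrC subrK.
have trD_gt0 : 0 < \tr D by apply: lt_le_trans ltr01 _; rewrite -subr_ge0.
split; last by apply/is_diag_mxP => i j ij; rewrite mxE (is_diag_mxP hD) ?mulr0.
apply: density_psd; last by rewrite mxtraceZ mulVf ?gt_eqF.
by apply: psdZ; rewrite ?invr_ge0 ?ltW // -(subrK M D); apply: psdD.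
Qed.

Lemma robustness_torus M u D : density M -> torus u -> is_diag_mx D ->
  psd (D - M) -> \tr D = qform M u -> is_robustness M (qform M u - 1).
Proof.
move=> hM hu hD hDM trD; split.
  by rewrite -trD; apply: robustness_feasible_certificate.
by move=> s hs; rewrite lerBlDl robustness_feasible_ge.
Qed.

Definition qform_weights M v : 'rV[C]_n := \row_i ((v i 0)^* * (M *m v) i 0).

Lemma mxtrace_qform_weights M v : \tr (diag_mx (qform_weights M v)) = qform M v.
Proof.
rewrite mxtrace_diag qformE; apply: eq_bigr => i _.
by rewrite !mxE mulr_sumr; apply: eq_bigr => j _; rewrite mulrA.
Qed.

Lemma torus_mul_diag u x : torus u -> torus x -> torus (diag_mx u^T *m x).
Proof. by move=> hu hx i; rewrite mul_diag_mx !mxE; apply: unimodularM. Qed.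

End QuadraticForms.

Section Qutrit.
Variable R : realType.
Local Notation C := R[i].

Lemma sum3 (V : nmodType) (F : 'I_3 -> V) : \sum_(i < 3) F i = F 0 + F 1 + F 2.
Proof.
by rewrite !big_ord_recl big_ord0 addr0 addrA; congr (F _ + F _ + F _); apply/val_inj.
Qed.

Definition col3 (a b c : C) : 'cV[C]_3 := \col_i [:: a; b; c]`_i.

Lemma torus_col3 (a b c : C) :
  unimodular a -> unimodular b -> unimodular c -> torus (col3 a b c).
Proof. by move=> ha hb hc i; rewrite mxE; case: i => [[|[|[|]]]]. Qed.

Lemma qform_weights_sub_mul (M : 'M[C]_3) u x : adj M = M -> torus u ->
  qform (diag_mx (qform_weights M u) - M) (diag_mx u^T *m x) =
  triangle_form ((u 0 0)^* * M 0 1 * u 1 0) ((u 1 0)^* * M 1 2 * u 2 0)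
    ((u 0 0)^* * M 0 2 * u 2 0) (x 0 0) (x 1 0) (x 2 0).
Proof.
move=> hM hu.
have herm (i j : 'I_3) : M j i = (M i j)^* by rewrite -{1}hM adjE.
have uV i : (u i 0)^* = (u i 0)^-1 := unimodular_conjV (hu i).
have u_neq0 i : u i 0 != 0 := unimodular_neq0 (hu i).
rewrite mul_diag_mx qformE !sum3 !mxE !sum3 /= !mulr1n !mulr0n.
rewrite (herm 0 1) (herm 0 2) (herm 1 2) /triangle_form !rmorphM /= !conjCK !uV.
by field; rewrite !u_neq0.
Qed.

(* Conjugated by [diag u], the difference is a triangle form, nonnegative on the
   torus by maximality of [u]. *)
Lemma psd_qform_weights_sub (M : 'M[C]_3) u : adj M = M -> torus u ->
    (forall v, torus v -> qform M v <= qform M u) ->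
  psd (diag_mx (qform_weights M u) - M).
Proof.
move=> hM hu hmax w.
have unitary_u : diag_mx u^T *m adj (diag_mx u^T) = 1%:M.
  rewrite /adj map_diag_mx tr_diag_mx mulmx_diag -diag_const_mx.
  by congr diag_mx; apply/rowP => i; rewrite !mxE mulrC (hu i).
rewrite -[w]mul1mx -unitary_u -mulmxA qform_weights_sub_mul //.
apply: triangle_form_ge0 => v0 v1 v2 h0 h1 h2.
have v_torus : torus (col3 v0 v1 v2) by apply: torus_col3.
have := qform_weights_sub_mul (col3 v0 v1 v2) hM hu; rewrite !mxE /= => <-.
have ux_torus := torus_mul_diag hu v_torus.
by rewrite qformD qformN qform_diag_torus // mxtrace_qform_weights subr_ge0 hmax.
Qed.

End Qutrit.

Section ComplexContinuity.
Variables (R : realType) (T : topologicalType).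
Local Notation C := R[i].

(* [R[i]] has no topological structure, so continuity of a complex-valued
   function is taken componentwise. *)
Definition continuous_ReIm (g : T -> C) :=
  continuous (fun t => complex.Re (g t)) /\ continuous (fun t => complex.Im (g t)).

Lemma continuous_ReIm_cst (c : C) : continuous_ReIm (fun => c).
Proof. by split=> t; apply: cvg_cst. Qed.

Lemma continuous_ReImD (f g : T -> C) :
  continuous_ReIm f -> continuous_ReIm g -> continuous_ReIm (fun t => f t + g t).
Proof.
move=> [fRe fIm] [gRe gIm]; rewrite /continuous_ReIm /=.
have -> : (fun t => complex.Re (f t + g t)) =
    (fun t => complex.Re (f t) + complex.Re (g t)).
  by apply/funext => t; case: (f t) (g t) => ? ? [].
have -> : (fun t => complex.Im (f t + g t)) =
    (fun t => complex.Im (f t) + complex.Im (g t)).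
  by apply/funext => t; case: (f t) (g t) => ? ? [].
by split=> t; [exact: continuousD (fRe t) (gRe t) | exact: continuousD (fIm t) (gIm t)].
Qed.

Lemma continuous_ReImM (f g : T -> C) :
  continuous_ReIm f -> continuous_ReIm g -> continuous_ReIm (fun t => f t * g t).
Proof.
move=> [fRe fIm] [gRe gIm]; rewrite /continuous_ReIm /=.
have -> : (fun t => complex.Re (f t * g t)) = (fun t =>
    complex.Re (f t) * complex.Re (g t) - complex.Im (f t) * complex.Im (g t)).
  by apply/funext => t; case: (f t) (g t) => ? ? [].
have -> : (fun t => complex.Im (f t * g t)) = (fun t =>
    complex.Re (f t) * complex.Im (g t) + complex.Im (f t) * complex.Re (g t)).
  by apply/funext => t; case: (f t) (g t) => ? ? [].
split=> t.
  exact: continuousB (continuousM (fRe t) (gRe t)) (continuousM (fIm t) (gIm t)).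
exact: continuousD (continuousM (fRe t) (gIm t)) (continuousM (fIm t) (gRe t)).
Qed.

Lemma continuous_ReImJ (f : T -> C) :
  continuous_ReIm f -> continuous_ReIm (fun t => (f t)^*).
Proof.
move=> [fRe fIm]; split.
  suff -> : (fun t => complex.Re (f t)^*) = (fun t => complex.Re (f t)) by [].
  by apply/funext => t; case: (f t).
suff -> : (fun t => complex.Im (f t)^*) = (fun t => - complex.Im (f t)).
  by move=> t; exact: continuousN (fIm t).
by apply/funext => t; case: (f t).
Qed.

Lemma continuous_ReIm_sum (I : finType) (F : I -> T -> C) :
  (forall i, continuous_ReIm (F i)) -> continuous_ReIm (fun t => \sum_i F i t).
Proof.
move=> hF; rewrite unlock; elim: (index_enum I) => [|i r IHr] /=.
  exact: continuous_ReIm_cst.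
exact: continuous_ReImD.
Qed.

Lemma continuous_ReIm_qform n (M : 'M[C]_n) (g : T -> 'cV[C]_n) :
    (forall i, continuous_ReIm (fun t => g t i 0)) ->
  continuous_ReIm (fun t => qform M (g t)).
Proof.
move=> hg; have -> : (fun t => qform M (g t)) =
    (fun t => \sum_i \sum_j (g t i 0)^* * M i j * g t j 0).
  by apply/funext => t; rewrite qformE.
apply: continuous_ReIm_sum => i; apply: continuous_ReIm_sum => j.
apply: continuous_ReImM => //; apply: continuous_ReImM; last exact: continuous_ReIm_cst.
exact: continuous_ReImJ.
Qed.

End ComplexContinuity.

Lemma continuous_fst (U V : topologicalType) : continuous (@fst U V).
Proof. by move=> ?; exact: cvg_fst. Qed.

Lemma continuous_snd (U V : topologicalType) : continuous (@snd U V).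
Proof. by move=> ?; exact: cvg_snd. Qed.

Section TorusMax.
Variable R : realType.
Local Notation C := R[i].
Local Open Scope classical_set_scope.

Definition circle : set (R * R) := [set p | p.1 ^+ 2 + p.2 ^+ 2 = 1].

Lemma compact_circle : compact circle.
Proof.
have fst_cont := @continuous_fst R R; have snd_cont := @continuous_snd R R.
apply: (@subclosed_compact _ _ (`[(-1 : R), 1] `*` `[(-1 : R), 1])).
- have -> : circle = (fun p => p.1 * p.1 + p.2 * p.2) @^-1` [set 1].
    by apply/funext => p; rewrite /circle /preimage /= !expr2.
  apply: preimage_closed; last exact: closed_eq.
  move=> p _; exact: continuousD (continuousM (fst_cont p) (fst_cont p))
    (continuousM (snd_cont p) (snd_cont p)).
- by apply: compact_setX; exact: segment_compact.
- move=> p; rewrite /circle /= => hp; have h1 := sqr_ge0 p.1; have h2 := sqr_ge0 p.2.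
  by split; rewrite /= in_itv /=; apply/andP; split; nra.
Qed.

Definition complex_of_pair (p : R * R) : C := (p.1 +i* p.2)%C.

(* The torus of [C^3] is parametrised by the compact set [circle^3]. *)
Definition torus_point (t : (R * R) * ((R * R) * (R * R))) : 'cV[C]_3 :=
  col3 (complex_of_pair t.1) (complex_of_pair t.2.1) (complex_of_pair t.2.2).

Lemma continuous_ReIm_torus_point i : continuous_ReIm (fun t => torus_point t i 0).
Proof.
have pair_cont (U : topologicalType) (g : U -> R * R) : continuous g ->
    continuous_ReIm (fun t => complex_of_pair (g t)).
  move=> cg; split=> t; apply: continuous_comp (cg t) _.
    exact: continuous_fst.
  exact: continuous_snd.
have -> : (fun t => torus_point t i 0) = (fun t =>
    [:: complex_of_pair t.1; complex_of_pair t.2.1; complex_of_pair t.2.2]`_i).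
  by apply/funext => t; rewrite mxE.
case: i => [[|[|[|//]]] i3] /=; apply: pair_cont; first exact: continuous_fst.
  by move=> t; apply: continuous_comp; [apply: continuous_snd | apply: continuous_fst].
by move=> t; apply: continuous_comp; apply: continuous_snd.
Qed.

Lemma torus_qform_max (M : 'M[C]_3) : adj M = M ->
  exists2 u, torus u & forall v, torus v -> qform M v <= qform M u.
Proof.
move=> hM; pose A := circle `*` (circle `*` circle).
pose f t := complex.Re (qform M (torus_point t)).
have A0 : A !=set0.
  by exists ((1, 0), ((1, 0), (1, 0))); rewrite /A /circle /= expr1n expr0n addr0.
have cA : compact A by do 2?apply: compact_setX; apply: compact_circle.
have cf : continuous f by case: (continuous_ReIm_qform M (@continuous_ReIm_torus_point)).
have [c Ac c_max] := compact_EVT_max A0 cA (continuous_subspaceT cf).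
have on_torus t : t \in A -> torus (torus_point t).
  by rewrite inE => -[h0 [h1 h2]]; apply: torus_col3; apply/unimodular_coord.
exists (torus_point c) => [|v hv]; first exact: on_torus.
pose z i := (complex.Re (v i 0), complex.Im (v i 0)).
have eta (w : C) : (complex.Re w +i* complex.Im w)%C = w by case: w.
have z_circle i : circle (z i) by apply/unimodular_coord; rewrite eta.
have vE : torus_point (z 0, (z 1, z 2)) = v.
  apply/matrixP => i j; rewrite (ord1 j) mxE.
  case: i => [[|[|[|//]]] i3]; rewrite /= /complex_of_pair /= eta;
    by congr (v _ 0); apply: val_inj.
rewrite -vE; apply: le_of_Re_le; rewrite ?qform_conj //.
by apply: c_max; rewrite inE; do !split; apply: z_circle.
Qed.

End TorusMax.

Theorem theorem3 (R : realType) (rho : 'M[R[i]]_3) :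
  density rho ->
  exists f s : R[i],
    is_coherence_fraction rho f /\ is_robustness rho s /\ f = (1 + s) / 3%:R.
Proof.
move=> hrho; have [herm _] := hrho.
have [u hu u_max] := torus_qform_max herm.
exists (3%:R^-1 * qform rho u), (qform rho u - 1); split; [|split].
- exact: coherence_fraction_torus_max.
- exact: robustness_torus hrho hu (diag_mx_is_diag _)
    (psd_qform_weights_sub herm hu u_max) (mxtrace_qform_weights _ _).
- by rewrite addrC subrK mulrC.
Qed.
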